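(* Let $U$ be a finite set, $(T,I,N)$ an IMTL triplet, $\widetilde{R}$ a $T$-preorder relation on $U$, $A\subseteq U$ a crisp set with $A\neq\emptyset$ and $coA=U\setminus A\neq\emptyset$ (identified with the fuzzy set $A(u)=1$ for $u\in A$, $A(u)=0$ otherwise), and $L:\mathbb{R}\times\mathbb{R}\to\mathbb{R}^+$ a loss function of $\lor$-type. Let $\hat{A}:U\to[0,1]$ be an optimal solution of $$\text{minimize }\sum_{u\in U}L(A(u),\hat{A}(u))\quad\text{subject to } T(\widetilde{R}(u,v),\hat{A}(v))\le\hat{A}(u)\ (u,v\in U),\quad 0\le\hat{A}(u)\le1\ (u\in U).$$ Then: for every $u\in A$ there is $v\in coA$ such that $\widetilde{R}^-_{N(\hat{A}(v))}(v)$ is adjacent to $\widetilde{R}^+_{\hat{A}(u)}(u)$; and for every $u\in coA$ there is $v\in A$ such that $\widetilde{R}^+_{\hat{A}(v)}(v)$ is adjacent to $\widetilde{R}^-_{N(\hat{A}(u))}(u)$.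
   Context: A residual triplet $(T,I,N)$ consists of a left-continuous $t$-norm $T$, its residual implicator $I(x,y)=\sup\{\beta\in[0,1]: T(x,\beta)\le y\}$ and $N(x)=I(x,0)$; it is IMTL if $N$ is involutive. $\widetilde{R}:U\times U\to[0,1]$ is a $T$-preorder if reflexive and $T$-transitive. Granules: $\widetilde{R}^+_\lambda(u)$ is the fuzzy set $w\mapsto T(\widetilde{R}(w,u),\lambda)$ and $\widetilde{R}^-_\lambda(v)$ is $w\mapsto T(\widetilde{R}(v,w),\lambda)$. Adjacency: for $x,y\in U$, $\widetilde{R}^-_{\lambda_2}(y)$ is adjacent to $\widetilde{R}^+_{\lambda_1}(x)$ if $\lambda_1=I(\lambda_2,N(\widetilde{R}(y,x)))$; $\widetilde{R}^+_{\lambda_1}(x)$ is adjacent to $\widetilde{R}^-_{\lambda_2}(y)$ if $\lambda_2=I(\lambda_1,N(\widetilde{R}(y,x)))$. A loss function $L$ is of $\lor$-type if for every real $a$: $L(a,a)=0$; $x\mapsto L(x,a)$ and $x\mapsto L(a,x)$ are increasing for $x>a$ and decreasing for $x<a$. *)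

From HB Require Import structures.
From mathcomp Require Import all_boot all_order all_algebra.
From mathcomp Require Import boolp classical_sets reals.
Set Implicit Arguments. Unset Strict Implicit. Unset Printing Implicit Defensive.
Import Order.TTheory GRing.Theory Num.Theory.
Local Open Scope classical_set_scope.
Local Open Scope ring_scope.

Section Defs.
Variable R : realType.

Definition in01 (x : R) := 0 <= x <= 1.

Definition tnorm (T : R -> R -> R) : Prop :=
  [/\ (forall x y, in01 x -> in01 y -> in01 (T x y)),
      (forall x y, in01 x -> in01 y -> T x y = T y x),
      (forall x y z, in01 x -> in01 y -> in01 z -> T x (T y z) = T (T x y) z),
      (forall x y z, in01 x -> in01 y -> in01 z -> y <= z -> T x y <= T x z)
    & (forall x, in01 x -> T x 1 = x)].

(* left-continuity (in the second argument; equivalent to both by commutativity) *)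
Definition left_continuous (T : R -> R -> R) : Prop :=
  forall x y, in01 x -> in01 y -> 0 < y ->
    forall eps, 0 < eps -> exists2 delta, 0 < delta &
      forall z, in01 z -> y - delta < z -> z <= y -> `|T x z - T x y| < eps.

Definition ltnorm (T : R -> R -> R) : Prop := tnorm T /\ left_continuous T.

Definition resI (T : R -> R -> R) (x y : R) : R :=
  sup [set b : R | in01 b /\ T x b <= y].

Definition resN (T : R -> R -> R) (x : R) : R := resI T x 0.

(* the residual triplet (T,I,N) is IMTL: T left-continuous t-norm, N involutive *)
Definition IMTL (T : R -> R -> R) : Prop :=
  ltnorm T /\ forall x, in01 x -> resN T (resN T x) = x.

Definition T_preorder (U : finType) (T : R -> R -> R) (Rt : U -> U -> R) : Prop :=
  [/\ (forall u v, in01 (Rt u v)),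
      (forall u, Rt u u = 1)
    & (forall u v w, T (Rt u v) (Rt v w) <= Rt u w)].

Definition gran_plus (U : finType) (T : R -> R -> R) (Rt : U -> U -> R)
  (lam : R) (u : U) : U -> R := fun w => T (Rt w u) lam.
Definition gran_minus (U : finType) (T : R -> R -> R) (Rt : U -> U -> R)
  (lam : R) (v : U) : U -> R := fun w => T (Rt v w) lam.

(* adjacency, expressed on the parameters of the granules:
   minus_adj_plus T Rt y l2 x l1 : R^-_{l2}(y) is adjacent to R^+_{l1}(x)
   plus_adj_minus T Rt x l1 y l2 : R^+_{l1}(x) is adjacent to R^-_{l2}(y) *)
Definition minus_adj_plus (U : finType) (T : R -> R -> R) (Rt : U -> U -> R)
  (y : U) (l2 : R) (x : U) (l1 : R) : Prop :=
  l1 = resI T l2 (resN T (Rt y x)).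
Definition plus_adj_minus (U : finType) (T : R -> R -> R) (Rt : U -> U -> R)
  (x : U) (l1 : R) (y : U) (l2 : R) : Prop :=
  l2 = resI T l1 (resN T (Rt y x)).

(* loss function L : R x R -> R^+ of \/-type ("increasing" read strictly) *)
Definition vee_loss (L : R -> R -> R) : Prop :=
  [/\ (forall x y, 0 <= L x y),
      (forall a, L a a = 0),
      (forall a x y, a < x -> x < y -> L x a < L y a /\ L a x < L a y)
    & (forall a x y, x < y -> y < a -> L y a < L x a /\ L a y < L a x)].

Definition crisp (U : finType) (A : {set U}) (u : U) : R :=
  if u \in A then 1 else 0.

Definition feasible (U : finType) (T : R -> R -> R) (Rt : U -> U -> R) (B : U -> R) : Prop :=
  (forall u v, T (Rt u v) (B v) <= B u) /\ (forall u, in01 (B u)).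

Definition optimal (U : finType) (T : R -> R -> R) (Rt : U -> U -> R)
  (L : R -> R -> R) (A : {set U}) (Ah : U -> R) : Prop :=
  feasible T Rt Ah /\
  forall B, feasible T Rt B ->
    \sum_(u : U) L (crisp A u) (Ah u) <= \sum_(u : U) L (crisp A u) (B u).

End Defs.

(* Raising Ah on A to w |-> min_{v notin A} I(R(v,w), Ah v), the largest value the
   constraints issued from coA allow, keeps the solution feasible; dually, so does
   lowering Ah off A to w |-> max_{v in A} T(R(w,v), Ah v).  Both moves bring every
   value closer to the crisp target, which strictly decreases a \/-type loss wherever
   something moves, so an optimal Ah is a fixed point of both: Ah u = I(R(v,u), Ah v)
   on A and Ah u = T(R(u,v), Ah v) off A for a minimising resp. maximising v.  In an
   IMTL triplet I(N b, N c) = I(c, b) and I(x, N y) = N(T(x, y)), which turn these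
   identities into the two adjacency relations. *)
From HB Require Import structures.
From mathcomp Require Import all_boot all_order all_algebra.
From mathcomp Require Import classical_sets reals.
Import Order.TTheory GRing.Theory Num.Theory.
Local Open Scope ring_scope.
Local Open Scope classical_set_scope.
Set Implicit Arguments. Unset Strict Implicit.

Lemma in01_0 (R : realType) : in01 (0 : R).
Proof. by rewrite /in01 lexx ler01. Qed.

Lemma in01_1 (R : realType) : in01 (1 : R).
Proof. by rewrite /in01 lexx ler01. Qed.

Lemma eq_in01_by_lower_bounds (R : realType) (x y : R) : in01 x -> in01 y ->
  (forall c, in01 c -> (c <= x) = (c <= y)) -> x = y.
Proof.
move=> hx hy H; apply/le_anti/andP; split; first by rewrite -H.
by rewrite H.
Qed.

Section TNorm.
Variables (R : realType) (T : R -> R -> R).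
Hypothesis hT : tnorm T.

Lemma tnorm_in01 x y : in01 x -> in01 y -> in01 (T x y).
Proof. by case: hT => h _ _ _ _; apply: h. Qed.

Lemma tnormC x y : in01 x -> in01 y -> T x y = T y x.
Proof. by case: hT => _ h _ _ _; apply: h. Qed.

Lemma tnormA x y z : in01 x -> in01 y -> in01 z -> T x (T y z) = T (T x y) z.
Proof. by case: hT => _ _ h _ _; apply: h. Qed.

Lemma le_tnormr x y z : in01 x -> in01 y -> in01 z -> y <= z -> T x y <= T x z.
Proof. by case: hT => _ _ _ h _; apply: h. Qed.

Lemma le_tnorml x y z : in01 x -> in01 y -> in01 z -> x <= y -> T x z <= T y z.
Proof. by move=> hx hy hz xy; rewrite !(tnormC _ hz) //; apply: le_tnormr. Qed.

Lemma tnormx0 x : in01 x -> T x 0 = 0.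
Proof.
move=> hx; have [_ _ _ _ T1] := hT.
apply/le_anti/andP; split; last by case/andP: (tnorm_in01 hx (in01_0 R)).
rewrite tnormC ?in01_0 // -[leRHS](T1 0 (in01_0 R)).
by apply: le_tnormr; rewrite ?in01_0 ?in01_1 //; case/andP: hx.
Qed.

End TNorm.

Section Residuation.
Variables (R : realType) (T : R -> R -> R).
Hypothesis hT : ltnorm T.
Let tT : tnorm T := hT.1.

Lemma resI_has_sup a b : in01 a -> in01 b ->
  has_sup [set c : R | in01 c /\ T a c <= b].
Proof.
move=> ha /andP[b0 _]; split; last by exists 1 => c [/andP[_ ?] _].
by exists 0; split; rewrite ?in01_0 // (tnormx0 tT ha).
Qed.

Lemma resI_ub a b c : in01 a -> in01 b -> in01 c -> T a c <= b -> c <= resI T a b.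
Proof. by move=> ha hb hc Tc; apply: sup_upper_bound (resI_has_sup ha hb) _ _. Qed.

Lemma resI_in01 a b : in01 a -> in01 b -> in01 (resI T a b).
Proof.
move=> ha hb; apply/andP; split.
  by apply: resI_ub; rewrite ?in01_0 // (tnormx0 tT ha); case/andP: hb.
by apply: ge_sup; [case: (resI_has_sup ha hb)|move=> c [/andP[_ ?] _]].
Qed.

(* Left-continuity is what makes the supremum itself satisfy the constraint. *)
Lemma tnorm_resI a b : in01 a -> in01 b -> T a (resI T a b) <= b.
Proof.
move=> ha hb; set s := resI T a b; have hs := resI_in01 ha hb.
rewrite leNgt; apply/negP => bTs.
have s_gt0 : 0 < s.
  rewrite lt_def; case/andP: (hs) => -> _; rewrite andbT.
  by apply: contraTneq bTs => ->; rewrite (tnormx0 tT ha) -leNgt; case/andP: hb.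
have eps_gt0 : 0 < T a s - b by rewrite subr_gt0.
have [d d_gt0 near_s] := hT.2 a s ha hs s_gt0 _ eps_gt0.
have [z [hz Tz] sdz] := sup_adherent d_gt0 (resI_has_sup ha hb).
have := near_s z hz sdz (resI_ub ha hb hz Tz).
by rewrite ltr_norml opprB ltrD2r ltNge Tz.
Qed.

Lemma resIP a b c : in01 a -> in01 b -> in01 c -> (c <= resI T a b) = (T a c <= b).
Proof.
move=> ha hb hc; apply/idP/idP; last exact: resI_ub.
move=> c_le; apply: le_trans (tnorm_resI ha hb).
exact: le_tnormr (resI_in01 ha hb) c_le.
Qed.

Lemma resN_in01 a : in01 a -> in01 (resN T a).
Proof. by move=> ha; apply: resI_in01 ha (in01_0 R). Qed.

Lemma resI_resN x y : in01 x -> in01 y -> resI T x (resN T y) = resN T (T x y).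
Proof.
move=> hx hy; have hxy := tnorm_in01 tT hx hy.
apply: eq_in01_by_lower_bounds => [||c hc]; rewrite ?resI_in01 ?resN_in01 ?in01_0 //.
rewrite /resN !resIP ?in01_0 ?resN_in01 ?(tnorm_in01 tT) //.
by rewrite tnormA // (tnormC tT hy hx).
Qed.

End Residuation.

Lemma resI_contra (R : realType) (T : R -> R -> R) a b : IMTL T -> in01 a -> in01 b ->
  resI T (resN T a) (resN T b) = resI T b a.
Proof.
move=> [hT Ninv] ha hb; have tT := hT.1.
have [hNa hNb] := (resN_in01 hT ha, resN_in01 hT hb).
apply: eq_in01_by_lower_bounds => [||c hc]; rewrite ?resI_in01 ?in01_0 //.
rewrite -[X in _ = (_ <= resI T b X)](Ninv a ha) /resN.
rewrite !resIP ?in01_0 ?(tnorm_in01 tT) ?resN_in01 //.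
by rewrite (tnormA tT) // (tnormC tT hb hNa) -(tnormA tT).
Qed.

Section VeeLoss.
Variables (R : realType) (L : R -> R -> R).
Hypothesis hL : vee_loss L.

Lemma vee_loss_lt_above a x y : a <= x -> x < y -> L a x < L a y.
Proof.
have [L_ge0 Laa Linc _] := hL.
rewrite le_eqVlt => /orP[/eqP <-|ax] xy; last exact: (Linc a x y ax xy).2.
rewrite Laa; apply: le_lt_trans (L_ge0 a ((a + y) / 2)) _.
by apply: (Linc _ _ _ _ _).2; rewrite midf_lt.
Qed.

Lemma vee_loss_lt_below a x y : y < x -> x <= a -> L a x < L a y.
Proof.
have [L_ge0 Laa _ Ldec] := hL.
move=> yx; rewrite le_eqVlt => /orP[/eqP xa|xa]; last exact: (Ldec a y x yx xa).2.
rewrite xa Laa; apply: le_lt_trans (L_ge0 a ((y + a) / 2)) _.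
by apply: (Ldec _ _ _ _ _).2; rewrite midf_lt // -xa.
Qed.

End VeeLoss.

Lemma ler_sum_strict (R : realType) (U : finType) (f g : U -> R) u :
  (forall w, f w <= g w) -> f u < g u -> \sum_(w : U) f w < \sum_(w : U) g w.
Proof.
move=> fg fg_u; rewrite (bigD1 u) //= [ltRHS](bigD1 u) //=.
by apply: ltr_leD => //; apply: ler_sum => w _.
Qed.

Section OptimalSolution.
Variables (R : realType) (U : finType) (T : R -> R -> R) (Rt : U -> U -> R).
Variables (A : {set U}) (L : R -> R -> R) (Ah : U -> R).
Hypotheses (hT : ltnorm T) (hRt : T_preorder T Rt).
Hypotheses (hL : vee_loss L) (hAh : optimal T Rt L A Ah).

Let tT : tnorm T := hT.1.
Let Rt01 : forall u v, in01 (Rt u v). Proof. by case: hRt. Qed.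
Let Rt_trans : forall u v w, T (Rt u v) (Rt v w) <= Rt u w. Proof. by case: hRt. Qed.
Let Ah_feasible : forall u v, T (Rt u v) (Ah v) <= Ah u. Proof. by case: hAh.1. Qed.
Let Ah01 : forall u, in01 (Ah u). Proof. by case: hAh.1. Qed.

Lemma optimal_fixed (B : U -> R) : feasible T Rt B ->
  (forall w, w \in A -> Ah w <= B w) -> (forall w, w \notin A -> B w <= Ah w) ->
  forall w, B w = Ah w.
Proof.
move=> hB upA downCA; have [_ B01] := hB.
have closer w : B w != Ah w -> L (crisp R A w) (B w) < L (crisp R A w) (Ah w).
  rewrite /crisp; case: ifP => wA BAh.
    apply: vee_loss_lt_below => //; last by case/andP: (B01 w).
    by rewrite lt_def BAh upA.
  apply: vee_loss_lt_above => //; first by case/andP: (B01 w).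
  by rewrite lt_def eq_sym BAh downCA ?wA.
move=> u; apply/eqP; apply: contraTT (hAh.2 B hB) => BAh_u; rewrite -ltNge.
apply: (ler_sum_strict (u := u)) (closer u BAh_u) => w.
by have [->|/closer/ltW] := eqVneq (B w) (Ah w).
Qed.

Section Raise.
Variable v0 : U.
Hypothesis v0A : v0 \notin A.

Definition raised w :=
  if w \in A then
    let m := Order.arg_min v0 (fun v => v \notin A) (fun v => resI T (Rt v w) (Ah v)) in
    resI T (Rt m w) (Ah m)
  else Ah w.

Lemma raised_min w : w \in A -> exists2 m, m \notin A &
  raised w = resI T (Rt m w) (Ah m) /\
  forall v, v \notin A -> raised w <= resI T (Rt v w) (Ah v).
Proof. by rewrite /raised => ->; case: arg_minP => // m mA m_min; exists m. Qed.

Lemma raised_in01 w : in01 (raised w).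
Proof. by rewrite /raised; case: ifP => // _; apply: resI_in01. Qed.

Lemma Ah_le_raised w : Ah w <= raised w.
Proof.
case: (boolP (w \in A)) => [/raised_min[m _ [-> _]]|wA]; last by rewrite /raised ifN.
by rewrite resIP.
Qed.

Lemma tnorm_raised_le v w : v \notin A -> T (Rt v w) (raised w) <= Ah v.
Proof.
move=> vA; case: (boolP (w \in A)) => [/raised_min[m _ [_ /(_ v vA)]]|wA].
  by rewrite resIP ?raised_in01.
by rewrite /raised ifN.
Qed.

Lemma raised_feasible : feasible T Rt raised.
Proof.
split=> [x y|]; last exact: raised_in01.
case: (boolP (x \in A)) => [/raised_min[m mA [-> _]]|xA]; last first.
  by rewrite {2}/raised ifN // tnorm_raised_le.
rewrite resIP ?(tnorm_in01 tT) ?raised_in01 // (tnormA tT) ?raised_in01 //.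
apply: le_trans (tnorm_raised_le y mA).
by apply: le_tnorml; rewrite ?(tnorm_in01 tT) ?raised_in01.
Qed.

Lemma optimal_residual u : u \in A ->
  exists2 v, v \notin A & Ah u = resI T (Rt v u) (Ah v).
Proof.
move=> uA; have [m mA [raised_u _]] := raised_min uA.
exists m => //; rewrite -raised_u.
apply/esym/(optimal_fixed raised_feasible) => [w _|w wA]; first exact: Ah_le_raised.
by rewrite /raised ifN.
Qed.

End Raise.

Section Lower.
Variable a0 : U.
Hypothesis a0A : a0 \in A.

Definition lowered w :=
  if w \in A then Ah w
  else
    let m := Order.arg_max a0 (fun v => v \in A) (fun v => T (Rt w v) (Ah v)) in
    T (Rt w m) (Ah m).

Lemma lowered_max w : w \notin A -> exists2 m, m \in A &
  lowered w = T (Rt w m) (Ah m) /\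
  forall v, v \in A -> T (Rt w v) (Ah v) <= lowered w.
Proof. by rewrite /lowered => /negbTE ->; case: arg_maxP => // m mA m_max; exists m. Qed.

Lemma lowered_in01 w : in01 (lowered w).
Proof. by rewrite /lowered; case: ifP => // _; apply: (tnorm_in01 tT). Qed.

Lemma lowered_le_Ah w : lowered w <= Ah w.
Proof.
case: (boolP (w \in A)) => [wA|/lowered_max[m _ [-> _]]]; first by rewrite /lowered wA.
exact: Ah_feasible.
Qed.

Lemma tnorm_le_lowered w v : v \in A -> T (Rt w v) (Ah v) <= lowered w.
Proof.
move=> vA; case: (boolP (w \in A)) => [wA|/lowered_max[m _ [_ /(_ v vA)]] //].
by rewrite /lowered wA.
Qed.

Lemma lowered_feasible : feasible T Rt lowered.
Proof.
split=> [x y|]; last exact: lowered_in01.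
case: (boolP (y \in A)) => [yA|/lowered_max[m mA [-> _]]].
  by rewrite /lowered yA tnorm_le_lowered.
rewrite (tnormA tT) //; apply: le_trans (tnorm_le_lowered x mA).
by apply: le_tnorml; rewrite ?(tnorm_in01 tT).
Qed.

Lemma optimal_tnorm u : u \notin A ->
  exists2 v, v \in A & Ah u = T (Rt u v) (Ah v).
Proof.
move=> uA; have [m mA [lowered_u _]] := lowered_max uA.
exists m => //; rewrite -lowered_u.
apply/esym/(optimal_fixed lowered_feasible) => [w wA|w _]; last exact: lowered_le_Ah.
by rewrite /lowered wA.
Qed.

End Lower.

End OptimalSolution.

Theorem proposition7 (R : realType) (U : finType) (T : R -> R -> R)
  (Rt : U -> U -> R) (A : {set U}) (L : R -> R -> R) (Ah : U -> R) :
  IMTL T -> T_preorder T Rt ->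
  A != finset.set0 -> ~: A != finset.set0 ->
  vee_loss L ->
  optimal T Rt L A Ah ->
  (forall u, u \in A -> exists2 v, v \in ~: A &
     minus_adj_plus T Rt v (resN T (Ah v)) u (Ah u)) /\
  (forall u, u \in ~: A -> exists2 v, v \in A &
     plus_adj_minus T Rt v (Ah v) u (resN T (Ah u))).
Proof.
move=> hI hRt /set0Pn[a0 a0A] /set0Pn[v0]; rewrite inE => v0A hL hAh.
have [[Rt01 _ _] [[_ Ah01] _]] := (hRt, hAh).
split=> u.
- move=> uA; have [v vA ->] := optimal_residual hI.1 hRt hL hAh v0A uA.
  by exists v; rewrite ?inE // /minus_adj_plus resI_contra.
- rewrite inE => uA; have [v vA ->] := optimal_tnorm hI.1 hRt hL hAh a0A uA.
  by exists v; rewrite // /plus_adj_minus (resI_resN hI.1) // (tnormC hI.1.1 (Ah01 v)).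
Qed.
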